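(* Let $A$ be an $n\times n$ Hermitian matrix. For all integers $1\le k\le m\le n$, $$\underbrace{X_m(A)\cup\dots\cup X_m(A)}_{\binom{m-1}{k-1}\text{ times}}\;\succ\;\underbrace{X_k(A)\cup\dots\cup X_k(A)}_{\binom{n-k}{m-k}\text{ times}}.$$
   Context: For $1\le m\le n$, $X_m(A)$ is the real vector (of length $m\binom nm$) listing the eigenvalues, with multiplicity, of all $\binom nm$ principal $m\times m$ submatrices of $A$. The symbol $\cup$ denotes concatenation of vectors. For $x\in\mathbb R^N$, $x^{\downarrow}$ is the non-increasing rearrangement of $x$; for $x,y\in\mathbb R^N$, $x\succ y$ means $\sum_{i=1}^k x^{\downarrow}_i\ge\sum_{i=1}^k y^{\downarrow}_i$ for all $k=1,\dots,N$ with equality for $k=N$ (majorization is invariant under reordering the entries). *)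

From HB Require Import structures.
From mathcomp Require Import all_boot all_order all_algebra.
From mathcomp Require Import complex.
Set Implicit Arguments. Unset Strict Implicit. Unset Printing Implicit Defensive.
Import Order.TTheory GRing.Theory Num.Theory.
Local Open Scope ring_scope.

Definition is_hermitian (R : rcfType) (n : nat) (A : 'M[R[i]]_n) : Prop :=
  forall i j, A i j = conjc (A j i).

Lemma char_poly_splits (R : rcfType) (k : nat) (M : 'M[R[i]]_k) :
  exists s : seq R[i], char_poly M == \prod_(z <- s) ('X - z%:P).
Proof.
have [s Hs] := closed_field_poly_normal (char_poly M).
by exists s; apply/eqP; rewrite {1}Hs (monicP (char_poly_monic M)) scale1r.
Qed.

(* The eigenvalues of M, listed with (algebraic) multiplicity: the roots of the
   characteristic polynomial.  The order is an arbitrary (fixed) choice. *)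
Definition eigs (R : rcfType) (k : nat) (M : 'M[R[i]]_k) : seq R[i] :=
  xchoose (char_poly_splits M).

Definition psubmx (T : Type) (n : nat) (A : 'M[T]_n) (S : {set 'I_n}) : 'M[T]_#|S| :=
  \matrix_(i < #|S|, j < #|S|) A (enum_val i) (enum_val j).

(* X_m(A): eigenvalues (real parts; they are real since A is Hermitian) of all
   principal m x m submatrices of A, concatenated. *)
Definition Xm (R : rcfType) (n : nat) (A : 'M[R[i]]_n) (m : nat) : seq R :=
  flatten [seq map (fun z : R[i] => complex.Re z) (eigs (psubmx A J)) | J <- enum [set J : {set 'I_n} | #|J| == m]].

Definition rep (T : Type) (c : nat) (x : seq T) : seq T := flatten (nseq c x).

Definition topsum (R : realDomainType) (k : nat) (x : seq R) : R :=
  \sum_(a <- take k (sort (fun a b : R => b <= a) x)) a.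

Definition majorizes (R : realDomainType) (x y : seq R) : Prop :=
  size x = size y /\
  (forall k, (1 <= k <= size x)%N -> topsum k y <= topsum k x) /\
  topsum (size x) x = topsum (size x) y.

From HB Require Import structures.
From mathcomp Require Import all_boot all_order all_algebra.
From mathcomp Require Import complex.
From mathcomp Require Import zify lra.
Set Implicit Arguments. Unset Strict Implicit. Unset Printing Implicit Defensive.
Import Order.TTheory GRing.Theory Num.Theory.

(* A real sequence [x] majorizes [y] iff both have the same length and
   sum and [\sum_i (y_i - r)^+ <= \sum_i (x_i - r)^+] for every real [r].  For a
   Hermitian [B] with spectral projector [Q] onto the eigenvalues above [r],
   [\sum (lambda - r)^+ = tr ((B - r) Q)], and [tr ((B - r) Q') <= c \sum (lambda - r)^+]
   whenever [0 <= Q' <= c I].  Fix an [m]-set [J]; the compressions of [B = A_J] to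
   its [k]-subsets [K] satisfy [\sum_K P_K^* P_K = binom(m-1, k-1) I], so pulling the
   projectors of the [A_K] back to [J] bounds [\sum_K \sum (eig A_K - r)^+] by
   [binom(m-1, k-1) \sum (eig A_J - r)^+], with equality of the plain eigenvalue
   sums (traces).  Summing over [J] counts each [k]-set [binom(n-k, m-k)] times. *)

Lemma card_in_bij (T U : finType) (A : {set T}) (B : {set U}) (f : T -> U) (g : U -> T) :
  {in A, forall x, f x \in B} -> {in B, forall y, g y \in A} ->
  {in A, cancel f g} -> {in B, cancel g f} -> #|A| = #|B|.
Proof.
move=> fA gB fK gK; rewrite -(card_in_imset (can_in_inj fK)).
apply: eq_card => y; apply/imsetP/idP => [[x xA ->]|yB]; first exact: fA.
by exists (g y); rewrite ?gB ?gK.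
Qed.

Lemma card_ksubsets_mem (T : finType) (J : {set T}) (x : T) (k : nat) :
  x \in J -> (0 < k)%N ->
  #|[set K : {set T} | [&& K \subset J, #|K| == k & x \in K]]| = 'C(#|J|.-1, k.-1).
Proof.
move=> xJ k_gt0; have -> : #|J|.-1 = #|J :\ x| by rewrite (cardsD1 x J) xJ.
rewrite -cards_draws; apply: (@card_in_bij _ _ _ _ (fun K => K :\ x) (fun L => x |: L)).
- move=> K; rewrite !inE => /and3P [KJ /eqP <- xK].
  by rewrite setSD //= (cardsD1 x K) xK.
- move=> L; rewrite !inE => /andP [LJ /eqP cL].
  have xL : x \notin L by apply/negP => /(subsetP LJ); rewrite !inE eqxx.
  rewrite cardsU1 xL cL add1n prednK // !eqxx andbT subUset sub1set xJ.
  by rewrite (subset_trans LJ) ?subD1set.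
- by move=> K; rewrite !inE => /and3P [_ _ xK]; rewrite setD1K.
- move=> L; rewrite !inE => /andP [LJ _]; apply: setU1K.
  by apply/negP => /(subsetP LJ); rewrite !inE eqxx.
Qed.

Lemma card_ksupersets (T : finType) (K : {set T}) (m : nat) :
  (#|K| <= m)%N ->
  #|[set J : {set T} | (#|J| == m) && (K \subset J)]| = 'C(#|T| - #|K|, m - #|K|).
Proof.
move=> Km; rewrite -[in #|T|](cardsC K) addKn -cards_draws.
apply: (@card_in_bij _ _ _ _ (fun J => J :\: K) (fun L => K :|: L)).
- move=> J; rewrite !inE => /andP [/eqP <- KJ].
  by rewrite subsetDr cardsD (setIidPr KJ) eqxx.
- move=> L; rewrite !inE => /andP [LK /eqP cL].
  rewrite subsetUl andbT cardsU.
  have -> : K :&: L = set0 by apply/disjoint_setI0; rewrite disjoint_sym disjoints_subset.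
  by rewrite cards0 subn0 cL subnKC.
- by move=> J; rewrite !inE => /andP [_ KJ]; rewrite -{2}(setID J K) (setIidPr KJ).
- move=> L; rewrite !inE => /andP [LK _]; rewrite setDUl setDv set0U.
  by apply/setDidPl; rewrite disjoints_subset.
Qed.

Local Open Scope ring_scope.

Lemma sum_rep (T : Type) (V : nmodType) (c : nat) (s : seq T) (g : T -> V) :
  \sum_(a <- rep c s) g a = (\sum_(a <- s) g a) *+ c.
Proof. by elim: c => [|c IH]; rewrite /rep ?big_nil //= big_cat -/(rep c s) IH mulrS. Qed.

Lemma sumr_const_seq (T : Type) (V : nmodType) (s : seq T) (c : V) :
  \sum_(a <- s) c = c *+ size s.
Proof. by elim: s => [|a s IH]; rewrite ?big_nil ?big_cons ?IH ?mulrS. Qed.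

Section Majorization.
Variable R : realDomainType.

Definition excess (r a : R) : R := Num.max (a - r) 0.

Lemma excess_ge0 r a : 0 <= excess r a.
Proof. by rewrite le_max lexx orbT. Qed.

Lemma topsum_le_excess (x : seq R) t r : (t <= size x)%N ->
  topsum t x <= t%:R * r + \sum_(a <- x) excess r a.
Proof.
move=> tx; rewrite /topsum; set s := sort _ x.
have ps : perm_eq s x by rewrite perm_sort.
rewrite -(perm_big _ ps) -[s in X in _ <= _ + X](cat_take_drop t s) big_cat /= addrA.
apply: ler_wpDr; first by apply: sumr_ge0 => a _; exact: excess_ge0.
have -> : t%:R * r = \sum_(a <- take t s) r.
  by rewrite sumr_const_seq size_takel ?size_sort // mulr_natl.
rewrite -big_split /=; apply: ler_sum => a _.
by rewrite -lerBlDl le_max lexx.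
Qed.

Lemma topsum_excess (x : seq R) t : (0 < t <= size x)%N ->
  exists r, topsum t x = t%:R * r + \sum_(a <- x) excess r a.
Proof.
move=> /andP [t_gt0 tx]; rewrite /topsum; set s := sort _ x.
have ps : perm_eq s x by rewrite perm_sort.
have ss : size s = size x by rewrite size_sort.
have s_sorted : sorted (fun a b : R => b <= a) s.
  by apply: sort_sorted => a b; rewrite orbC le_total.
have ge_trans : transitive (fun a b : R => b <= a) by move=> b a c ba cb; exact: le_trans cb ba.
have s_nth := sorted_leq_nth ge_trans (fun a : R => lexx a) 0 s_sorted.
exists (nth 0 s t.-1); set r := nth 0 s t.-1.
rewrite -(perm_big _ ps) -{2}(cat_take_drop t s) big_cat /=.
have -> : \sum_(a <- drop t s) excess r a = 0.
  rewrite (big_nth 0) big1_seq // => i /andP [_]; rewrite mem_index_iota size_drop.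
  move=> /andP [_ hi]; rewrite nth_drop.
  by apply/max_idPr; rewrite subr_le0; apply: s_nth; rewrite ?inE; rewrite ss in hi *; lia.
have -> : \sum_(a <- take t s) excess r a = \sum_(a <- take t s) (a - r).
  rewrite (big_nth 0) [RHS](big_nth 0) size_takel ?ss // !big_nat.
  apply: eq_bigr => i /andP [_ hi]; rewrite nth_take //.
  by apply/max_idPl; rewrite subr_ge0; apply: s_nth; rewrite ?inE ?ss; lia.
by rewrite addr0 sumrB sumr_const_seq size_takel ?ss // mulr_natl addrC subrK.
Qed.

Lemma topsum_size (x : seq R) : topsum (size x) x = \sum_(a <- x) a.
Proof.
rewrite /topsum -(size_sort (fun a b : R => b <= a)) take_size.
by apply: perm_big; rewrite perm_sort.
Qed.

Lemma majorizes_excess (x y : seq R) : size x = size y ->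
  \sum_(a <- x) a = \sum_(a <- y) a ->
  (forall r, \sum_(a <- y) excess r a <= \sum_(a <- x) excess r a) ->
  majorizes x y.
Proof.
move=> sz sm hr; split=> //; split; last by rewrite topsum_size {1}sz topsum_size.
move=> t tx; have [r ->] := topsum_excess tx.
by apply: le_trans (topsum_le_excess r _) _; rewrite ?lerD2l // -sz; case/andP: tx.
Qed.

End Majorization.

Local Open Scope complex_scope.
Local Open Scope sesquilinear_scope.

Lemma char_poly_similar (F : fieldType) q (P D : 'M[F]_q) : P \in unitmx ->
  char_poly (invmx P *m D *m P) = char_poly D.
Proof.
move=> Pu; rewrite /char_poly /char_poly_mx !map_mxM.
set iP := map_mx _ (invmx P); set P' := map_mx _ P; set D' := map_mx _ D.
have iPP : iP *m P' = 1%:M by rewrite -map_mxM mulVmx // map_mx1.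
have -> : 'X%:M - iP *m D' *m P' = iP *m ('X%:M - D') *m P'.
  by rewrite mulmxBr mulmxBl mul_mx_scalar -scalemxAl iPP scalemx1.
by rewrite !det_mulmx mulrAC -det_mulmx iPP det1 mul1r.
Qed.

Section ComplexMatrices.
Variable R : rcfType.
Local Notation C := R[i].

Lemma Re_sum (I : Type) (s : seq I) (P : pred I) (F : I -> C) :
  complex.Re (\sum_(i <- s | P i) F i) = \sum_(i <- s | P i) complex.Re (F i).
Proof. exact: (raddf_sum (@complex.Re R : Rcomplex R -> R)). Qed.

Lemma Re_realM (a : R) (z : C) : complex.Re (a%:C * z) = a * complex.Re z.
Proof. by case: z => x y /=; rewrite mul0r subr0. Qed.

Lemma Re_mulcJ_ge0 (z : C) : 0 <= complex.Re (z * z^*).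
Proof. by have := mulcJ_ge0 z; rewrite lecE => /andP []. Qed.

Lemma hermitianP q (M : 'M[C]_q) : is_hermitian M <-> M ^t* = M.
Proof.
split=> hM; first by apply/matrixP => i j; rewrite !mxE [RHS]hM.
by move=> i j; rewrite -[M in LHS]hM !mxE.
Qed.

Lemma hermitian_hermsymmx q (M : 'M[C]_q) : is_hermitian M -> M \is hermsymmx.
Proof. by move=> /hermitianP hM; apply/is_hermitianmxP; rewrite expr0 scale1r hM. Qed.

Lemma hermitian_compress p q (B : 'M[C]_p) (P : 'M[C]_(q, p)) :
  is_hermitian B -> is_hermitian (P *m B *m P ^t*).
Proof.
move=> /hermitianP hB; apply/hermitianP.
by rewrite !trmx_mul !map_mxM trmxCK hB mulmxA.
Qed.

Lemma unitarymx_mulCmx q (U : 'M[C]_q) : U \is unitarymx -> U ^t* *m U = 1%:M.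
Proof. by move=> Uu; rewrite -(invmx_unitary Uu) mulVmx ?unitarymx_unit. Qed.

Lemma size_eigs q (M : 'M[C]_q) : size (eigs M) = q.
Proof.
have /eqP/(congr1 (fun p : {poly C} => size p)) := xchooseP (char_poly_splits M).
by rewrite size_char_poly size_prod_XsubC => -[].
Qed.

Lemma row_quad_form p q (A : 'M[C]_(p, q)) (Q : 'M[C]_q) i :
  (row i A *m Q *m (row i A) ^t*) 0 0 = (A *m Q *m A ^t*) i i.
Proof.
rewrite !mxE; apply: eq_bigr => j _; rewrite !mxE; congr (_ * _).
by apply: eq_bigr => l _; rewrite !mxE.
Qed.

Lemma row_mulmx_trC p q (A : 'M[C]_(p, q)) i :
  (row i A *m (row i A) ^t*) 0 0 = (A *m A ^t*) i i.
Proof. by rewrite !mxE; apply: eq_bigr => j _; rewrite !mxE. Qed.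

(* [psd_bounded c Q] says [0 <= Q <= c I] in the Loewner order, tested on the
   real parts of the Hermitian forms [v Q v^*]. *)
Definition psd_bounded q (c : R) (Q : 'M[C]_q) := forall v : 'rV[C]_q,
  0 <= complex.Re ((v *m Q *m v ^t*) 0 0) <= c * complex.Re ((v *m v ^t*) 0 0).

Section Spectral.
Variables (q : nat) (M : 'M[C]_q).
Hypothesis hM : is_hermitian M.
Local Notation U := (spectralmx M).
Local Notation d i := (complex.Re (spectral_diag M 0 i)).

Lemma hermitian_spectral : M = U ^t* *m diag_mx (\row_i (d i)%:C) *m U.
Proof.
have -> : \row_i (d i)%:C = spectral_diag M.
  apply/rowP => i; have /mxOverP/(_ 0 i) := hermitian_spectral_diag_real (hermitian_hermsymmx hM).
  by move=> /RRe_real; rewrite mxE.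
rewrite -invmx_unitary ?spectral_unitarymx //; apply/orthomx_spectralP.
exact/hermitian_normalmx/hermitian_hermsymmx.
Qed.

Lemma eigs_hermitian : perm_eq (eigs M) [seq (d i)%:C | i <- enum 'I_q].
Proof.
have /eqP := xchooseP (char_poly_splits M).
rewrite {1}hermitian_spectral -invmx_unitary ?spectral_unitarymx //.
rewrite char_poly_similar ?spectral_unit // char_poly_trig ?diag_mx_is_trig // => splitM.
apply: prod_XsubC_eq; rewrite -splitM big_map big_enum /=.
by apply: eq_bigr => i _; rewrite !mxE eqxx mulr1n.
Qed.

Lemma sum_eigs_Re : \sum_(z <- eigs M) complex.Re z = complex.Re (\tr M).
Proof.
rewrite (perm_big _ eigs_hermitian) big_map big_enum /= {2}hermitian_spectral.
rewrite mxtrace_mulC mulmxA (unitarymxP (spectral_unitarymx M)) mul1mx mxtrace_diag.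
by rewrite Re_sum; apply: eq_bigr => i _; rewrite mxE.
Qed.

(* Entry [(i, i)] of [U *m Q *m U ^t*] is the weight of [Q] on the [i]-th eigenvector. *)
Lemma Re_trace_shift_mul (Q : 'M[C]_q) r :
  complex.Re (\tr ((M - r%:C%:M) *m Q)) =
  \sum_i (d i - r) * complex.Re ((U *m Q *m U ^t*) i i).
Proof.
have -> : M - r%:C%:M = U ^t* *m diag_mx (\row_i (d i - r)%:C) *m U.
  have -> : diag_mx (\row_i (d i - r)%:C) = diag_mx (\row_i (d i)%:C) - r%:C%:M.
    by apply/matrixP => i j; rewrite !mxE rmorphB mulrnBl.
  rewrite mulmxBr mulmxBl mul_mx_scalar -scalemxAl.
  by rewrite unitarymx_mulCmx ?spectral_unitarymx // scalemx1 -hermitian_spectral.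
rewrite -!mulmxA mxtrace_mulC -!mulmxA Re_sum /mxtrace; apply: eq_bigr => i _.
by rewrite mul_diag_mx !mxE Re_realM.
Qed.

Lemma Re_trace_le_excess (Q : 'M[C]_q) c r : psd_bounded c Q ->
  complex.Re (\tr ((M - r%:C%:M) *m Q)) <= c * \sum_(z <- eigs M) excess r (complex.Re z).
Proof.
move=> hQ; rewrite Re_trace_shift_mul (perm_big _ eigs_hermitian) big_map big_enum /=.
rewrite mulr_sumr; apply: ler_sum => i _.
have := hQ (row i U); rewrite row_quad_form row_mulmx_trC (unitarymxP (spectral_unitarymx M)).
rewrite [1%:M i i]mxE eqxx mulr1 /excess => /andP [w_ge0 w_le].
by case: (leP 0 (d i - r)) => hd; rewrite ?mulr0; nra.
Qed.

End Spectral.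

Definition excess_projector q (M : 'M[C]_q) (r : R) : 'M[C]_q :=
  (spectralmx M) ^t* *m diag_mx (\row_i (r < complex.Re (spectral_diag M 0 i))%R%:R)
    *m spectralmx M.

Lemma excess_projector_bounded q (M : 'M[C]_q) r : psd_bounded 1 (excess_projector M r).
Proof.
move=> v; set U := spectralmx M; set w := v *m U ^t*.
have -> : v *m excess_projector M r *m v ^t* =
          w *m diag_mx (\row_i (r < complex.Re (spectral_diag M 0 i))%R%:R) *m w ^t*.
  by rewrite /w trmx_mul map_mxM trmxCK !mulmxA.
have -> : v *m v ^t* = w *m w ^t*.
  rewrite /w trmx_mul map_mxM trmxCK mulmxA -(mulmxA v).
  by rewrite unitarymx_mulCmx ?mulmx1 ?spectral_unitarymx.
clearbody w; rewrite mul1r !mxE !Re_sum.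
apply/andP; split; [apply: sumr_ge0 | apply: ler_sum] => j _;
  by rewrite mul_mx_diag !mxE; case: (_ < _); rewrite ?mulr1 ?mulr0 ?mul0r //; apply: Re_mulcJ_ge0.
Qed.

Lemma Re_trace_excess_projector q (M : 'M[C]_q) r : is_hermitian M ->
  complex.Re (\tr ((M - r%:C%:M) *m excess_projector M r)) =
  \sum_(z <- eigs M) excess r (complex.Re z).
Proof.
move=> hM; rewrite Re_trace_shift_mul // (perm_big _ (eigs_hermitian hM)) big_map big_enum /=.
have Uu := spectral_unitarymx M; apply: eq_bigr => i _.
rewrite /excess_projector !mulmxA (unitarymxP Uu) mul1mx -mulmxA (unitarymxP Uu) mulmx1.
rewrite !mxE eqxx mulr1n /excess; case: ltP => h.
  by rewrite mulr1 (max_idPl _) // subr_ge0 ltW.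
by rewrite mulr0 (max_idPr _) // subr_le0.
Qed.

Lemma mxtrace_compress p q (B : 'M[C]_p) (P : 'M[C]_(q, p)) (Q : 'M[C]_q) s :
  P *m P ^t* = 1%:M ->
  \tr ((P *m B *m P ^t* - s%:M) *m Q) = \tr ((B - s%:M) *m (P ^t* *m Q *m P)).
Proof.
move=> PP; rewrite !mulmxBl !mul_scalar_mx !raddfB /= !mxtraceZ.
congr (_ - _); first by rewrite -!mulmxA mxtrace_mulC -!mulmxA.
by rewrite [in RHS]mxtrace_mulC mulmxA PP mul1mx.
Qed.

Section Compressions.
Variables (p : nat) (B : 'M[C]_p) (I : finType) (S : {set I}) (dim : I -> nat).
Variables (P : forall l, 'M[C]_(dim l, p)) (c : nat).
Hypothesis hB : is_hermitian B.
Hypothesis sumP : \sum_(l in S) (P l) ^t* *m P l = c%:R%:M.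

Lemma sum_compressions_Re_eigs :
  \sum_(l in S) \sum_(z <- eigs (P l *m B *m (P l) ^t*)) complex.Re z =
  c%:R * \sum_(z <- eigs B) complex.Re z.
Proof.
under eq_bigr => l _ do
  rewrite (sum_eigs_Re (hermitian_compress (P l) hB)) -mulmxA mxtrace_mulC -mulmxA.
rewrite sum_eigs_Re // -Re_sum -raddf_sum /= -mulmx_sumr sumP mul_mx_scalar mxtraceZ.
by rewrite -(rmorph_nat (real_complex R)) Re_realM.
Qed.

Hypothesis coisoP : {in S, forall l, P l *m (P l) ^t* = 1%:M}.

(* Pull the excess projectors of the compressions back to [B]. *)
Lemma sum_compressions_excess_le r :
  \sum_(l in S) \sum_(z <- eigs (P l *m B *m (P l) ^t*)) excess r (complex.Re z) <=
  c%:R * \sum_(z <- eigs B) excess r (complex.Re z).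
Proof.
pose Q l := (P l) ^t* *m excess_projector (P l *m B *m (P l) ^t*) r *m P l.
under eq_bigr => l lS do rewrite -(Re_trace_excess_projector _ (hermitian_compress (P l) hB))
  (mxtrace_compress _ _ _ (coisoP lS)) -/(Q l).
rewrite -Re_sum -raddf_sum /= -mulmx_sumr; apply: Re_trace_le_excess => // v.
have pull l (X : 'M[C]_(dim l)) :
    v *m ((P l) ^t* *m X *m P l) *m v ^t* = (v *m (P l) ^t*) *m X *m (v *m (P l) ^t*) ^t*.
  by rewrite trmx_mul map_mxM trmxCK !mulmxA.
have Q_bounded l : 0 <= complex.Re ((v *m Q l *m v ^t*) 0 0) <=
    complex.Re ((v *m ((P l) ^t* *m P l) *m v ^t*) 0 0).
  rewrite /Q pull -[X in _ && (_ <= X)]mul1r -[X in X *m P l]mulmx1 pull mulmx1.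
  exact: excess_projector_bounded.
rewrite mulmx_sumr mulmx_suml summxE Re_sum; apply/andP; split.
  by apply: sumr_ge0 => l _; case/andP: (Q_bounded l).
apply: le_trans (ler_sum _ (fun l _ => proj2 (andP (Q_bounded l)))) _.
rewrite -Re_sum -summxE -mulmx_suml -mulmx_sumr sumP mul_mx_scalar -scalemxAl mxE.
by rewrite -(rmorph_nat (real_complex R)) Re_realM.
Qed.

End Compressions.
End ComplexMatrices.

Lemma sum_ksubsets_ksupersets (T : finType) (V : nmodType) (H : {set T} -> V) k m :
  (k <= m)%N ->
  \sum_(J in [set J : {set T} | #|J| == m])
     \sum_(K in [set K : {set T} | K \subset J & #|K| == k]) H K =
  (\sum_(K in [set K : {set T} | #|K| == k]) H K) *+ 'C(#|T| - k, m - k).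
Proof.
move=> km; pose Sk := [set K : {set T} | #|K| == k].
rewrite (eq_bigr (fun J : {set T} => \sum_(K | (K \in Sk) && (K \subset J)) H K)) => [|J _];
  last by apply: eq_bigl => K; rewrite !inE andbC.
rewrite (exchange_big_dep (mem Sk)) => [|J K _ /andP []]//=; rewrite -sumrMnl.
apply: eq_bigr => K; rewrite inE => /eqP cK.
rewrite (eq_bigl (mem [set J : {set T} | (#|J| == m) && (K \subset J)])) => [|J].
  by rewrite sumr_const card_ksupersets cK.
by rewrite !inE cK eqxx.
Qed.

Section PrincipalSubmatrices.
Variables (R : rcfType) (n : nat).
Local Notation C := R[i].

Lemma psubmx_hermitian (A : 'M[C]_n) (J : {set 'I_n}) :
  is_hermitian A -> is_hermitian (psubmx A J).
Proof. by move=> hA i j; rewrite !mxE hA. Qed.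

Definition restrmx (K J : {set 'I_n}) : 'M[C]_(#|K|, #|J|) :=
  \matrix_(i, j) (enum_val i == enum_val j)%:R.

Lemma sumr_indicator_in (K : {set 'I_n}) (a : 'I_n) (g : 'I_n -> C) :
  \sum_(y in K) (y == a)%:R * g y = (a \in K)%:R * g a.
Proof.
rewrite (big_mkcond (mem K)) (bigD1 a) //= eqxx mul1r big1 ?addr0 //.
  by case: (a \in K); rewrite ?mul1r ?mul0r.
by move=> y /negPf ya; rewrite ya mul0r if_same.
Qed.

Lemma sum_enum_val (J : {set 'I_n}) (h : 'I_n -> C) :
  \sum_(j < #|J|) h (enum_val j) = \sum_(y in J) h y.
Proof. by rewrite (big_enum_val (A := mem J)). Qed.

Lemma restrmx_psubmx (A : 'M[C]_n) (K J : {set 'I_n}) : K \subset J ->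
  restrmx K J *m psubmx A J *m (restrmx K J) ^t* = psubmx A K.
Proof.
move=> KJ; apply/matrixP => i i'; rewrite !mxE.
rewrite (eq_bigr (fun j' => (enum_val j' == enum_val i')%:R * A (enum_val i) (enum_val j'))).
  rewrite (sum_enum_val J (fun y => (y == enum_val i')%:R * A (enum_val i) y)).
  by rewrite sumr_indicator_in (subsetP KJ) ?enum_valP // mul1r.
move=> j' _; rewrite !mxE conjC_nat eq_sym mulrC; congr (_ * _).
rewrite (eq_bigr (fun j => (enum_val j == enum_val i)%:R * A (enum_val j) (enum_val j'))).
  rewrite (sum_enum_val J (fun y => (y == enum_val i)%:R * A y (enum_val j'))).
  by rewrite sumr_indicator_in (subsetP KJ) ?enum_valP // mul1r.
by move=> j _; rewrite !mxE eq_sym.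
Qed.

Lemma restrmx_coisometry (K J : {set 'I_n}) : K \subset J ->
  restrmx K J *m (restrmx K J) ^t* = 1%:M.
Proof.
move=> KJ; apply/matrixP => i i'; rewrite !mxE.
under eq_bigr => j _ do rewrite !mxE conjC_nat [enum_val i == _]eq_sym [enum_val i' == _]eq_sym.
rewrite (sum_enum_val J (fun y => (y == enum_val i)%:R * (y == enum_val i')%:R)).
by rewrite sumr_indicator_in (subsetP KJ) ?enum_valP // mul1r (inj_eq enum_val_inj).
Qed.

(* Each coordinate of [J] lies in [binom(#|J| - 1, k - 1)] of the [k]-subsets of [J]. *)
Lemma sum_restrmx_ksubsets (J : {set 'I_n}) (k : nat) : (0 < k)%N ->
  \sum_(K in [set K : {set 'I_n} | K \subset J & #|K| == k]) (restrmx K J) ^t* *m restrmx K J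
    = ('C(#|J|.-1, k.-1)%:R : C)%:M.
Proof.
move=> k_gt0; apply/matrixP => j j'; rewrite summxE !mxE.
rewrite (eq_bigr (fun K : {set 'I_n} =>
  ((enum_val j \in K)%:R : C) * (enum_val j == enum_val j')%:R)).
  rewrite -mulr_suml (inj_eq enum_val_inj) (bigID (fun K : {set 'I_n} => enum_val j \in K)) /=.
  rewrite [X in _ + X]big1 => [|K /andP [_ /negPf ->]//]; rewrite addr0.
  rewrite (eq_bigr (fun _ => 1)) => [|K /andP [_ ->]//]; rewrite sumr_const.
  rewrite (eq_card (B := [set K : {set 'I_n} | [&& K \subset J, #|K| == k & enum_val j \in K]])).
    by rewrite card_ksubsets_mem ?enum_valP //; case: (j == j'); rewrite ?mulr1 ?mulr0.
  by move=> K; rewrite unfold_in /= !inE andbA.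
move=> K _; rewrite !mxE.
rewrite (eq_bigr (fun i => (enum_val i == enum_val j)%:R * (enum_val i == enum_val j')%:R)).
  rewrite (sum_enum_val K (fun y => (y == enum_val j)%:R * (y == enum_val j')%:R)).
  exact: sumr_indicator_in.
by move=> i _; rewrite !mxE conjC_nat.
Qed.

Variable A : 'M[C]_n.
Hypothesis hA : is_hermitian A.

Definition eig_sum (g : R -> R) (K : {set 'I_n}) : R :=
  \sum_(z <- eigs (psubmx A K)) g (complex.Re z).

Lemma sum_Xm m (g : R -> R) :
  \sum_(a <- Xm A m) g a = \sum_(J in [set J : {set 'I_n} | #|J| == m]) eig_sum g J.
Proof. by rewrite big_flatten big_map big_enum; apply: eq_bigr => J _; rewrite big_map. Qed.

Lemma sum_ksubsets_eig_excess_le (J : {set 'I_n}) k r : (0 < k)%N ->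
  \sum_(K in [set K : {set 'I_n} | K \subset J & #|K| == k]) eig_sum (excess r) K <=
  'C(#|J|.-1, k.-1)%:R * eig_sum (excess r) J.
Proof.
move=> k_gt0; rewrite (eq_bigr (fun K => \sum_(z <- eigs (restrmx K J *m psubmx A J *m
  (restrmx K J) ^t*)) excess r (complex.Re z))) => [|K]; last first.
  by rewrite inE => /andP [KJ _]; rewrite restrmx_psubmx.
rewrite /eig_sum; apply: (sum_compressions_excess_le (P := fun K => restrmx K J)
  (psubmx_hermitian hA) (sum_restrmx_ksubsets J k_gt0)).
by move=> K; rewrite inE => /andP [KJ _]; apply: restrmx_coisometry.
Qed.

Lemma sum_ksubsets_eig_Re (J : {set 'I_n}) k : (0 < k)%N ->
  \sum_(K in [set K : {set 'I_n} | K \subset J & #|K| == k]) eig_sum id K =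
  'C(#|J|.-1, k.-1)%:R * eig_sum id J.
Proof.
move=> k_gt0; rewrite (eq_bigr (fun K => \sum_(z <- eigs (restrmx K J *m psubmx A J *m
  (restrmx K J) ^t*)) complex.Re z)) => [|K]; last first.
  by rewrite inE => /andP [KJ _]; rewrite restrmx_psubmx.
rewrite /eig_sum; exact: (sum_compressions_Re_eigs (P := fun K => restrmx K J)
  (psubmx_hermitian hA) (sum_restrmx_ksubsets J k_gt0)).
Qed.

Lemma sum_ksubsets_eig_count (J : {set 'I_n}) k : (0 < k)%N ->
  \sum_(K in [set K : {set 'I_n} | K \subset J & #|K| == k]) eig_sum (fun=> 1) K =
  'C(#|J|.-1, k.-1)%:R * eig_sum (fun=> 1) J.
Proof.
have eig_sum1 K : eig_sum (fun=> 1) K = #|K|%:R by rewrite /eig_sum sumr_const_seq size_eigs.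
move=> k_gt0; rewrite (eq_bigr (fun=> k%:R)) => [|K]; last first.
  by rewrite inE eig_sum1 => /andP [_ /eqP ->].
rewrite sumr_const cards_draws eig_sum1 -mulrnA -natrM.
by rewrite [X in _ = X%:R]mulnC mul_bin_diag prednK.
Qed.

End PrincipalSubmatrices.

Theorem theorem4p1 (R : rcfType) (n : nat) (A : 'M[R[i]]_n) :
  is_hermitian A ->
  forall k m : nat, (1 <= k)%N -> (k <= m)%N -> (m <= n)%N ->
  majorizes (rep 'C(m.-1, k.-1) (Xm A m)) (rep 'C(n - k, m - k) (Xm A k)).
Proof.
move=> hA k m k_gt0 km _; set Sm := [set J : {set 'I_n} | #|J| == m].
have sumX g : \sum_(a <- rep 'C(m.-1, k.-1) (Xm A m)) g a =
    \sum_(J in Sm) 'C(#|J|.-1, k.-1)%:R * eig_sum A g J.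
  rewrite sum_rep sum_Xm -sumrMnl; apply: eq_bigr => J; rewrite inE => /eqP ->.
  by rewrite mulr_natl.
have sumY g : \sum_(a <- rep 'C(n - k, m - k) (Xm A k)) g a =
    \sum_(J in Sm) \sum_(K in [set K : {set 'I_n} | K \subset J & #|K| == k]) eig_sum A g K.
  by rewrite sum_rep sum_Xm sum_ksubsets_ksupersets // card_ord.
apply: majorizes_excess.
- apply/eqP; rewrite -(eqr_nat R) -!sumr_const_seq sumX sumY; apply/eqP.
  by apply: eq_bigr => J _; rewrite sum_ksubsets_eig_count.
- by rewrite sumX sumY; apply: eq_bigr => J _; rewrite (sum_ksubsets_eig_Re hA).
- move=> r; rewrite sumX sumY; apply: ler_sum => J _.
  exact: sum_ksubsets_eig_excess_le.
Qed.
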